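(* Let $(F,+,\cdot)$ be a (left) near-field such that the set $\{+_\sigma:\sigma\text{ a multiplicative automorphism of }F\}$ (equivalently, the set of near-fields $(F,+_\sigma,\cdot)$ induced by multiplicative automorphisms) is finite, and such that $F$ is finite dimensional as a right vector space over its division ring $F_{d}$ of right distributive elements. Let $\{V_k\}_{k\in I}$ be a family of multiplicative near-vector spaces over $F$. Then the direct product $\prod_{k\in I}V_k$, with componentwise addition and scalar multiplication, is a near-vector space over $F$.
   Context: A (left) near-field is $(F,+,\cdot,0,1)$ where $(F,\cdot,1)$ is a monoid, $(F\setminus\{0\},\cdot)$ is a group, $(F,+,0)$ is an abelian group, and $\alpha(\beta+\gamma)=\alpha\beta+\alpha\gamma$. $F_{d}$ is the set of $\gamma$ with $(\alpha+\beta)\gamma=\alpha\gamma+\beta\gamma$ for all $\alpha,\beta$; it is a division ring and $F$ is a right vector space over it. A multiplicative automorphism is a monoid automorphism of $(F,\cdot)$; for such $\tau$, $\alpha+_\tau\beta=\tau^{-1}(\tau(\alpha)+\tau(\beta))$. A near-vector space over $F$ is an abelian group $V$ with a left action of $(F,\cdot)$ by group endomorphisms, with $0,1,-1$ acting as $0,\mathrm{id},-\mathrm{id}$, the action free, and the quasi-kernel $Q(V)=\{u:\forall\alpha,\beta\ \exists\gamma,\ \alpha u+\beta u=\gamma u\}$ generating $V$ additively. For families $\boldsymbol\sigma=(\sigma_i)_{i\in J}$, $\boldsymbol\rho=(\rho_i)_{i\in J}$ of multiplicative automorphisms, $F^{\boldsymbol\sigma,\boldsymbol\rho}$ is the set of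 finitely supported $(\alpha_i)\in F^J$ with addition $(\alpha_i+_{\sigma_i}\beta_i)$ and scalar multiplication $\alpha\cdot(\alpha_i)=(\rho_i(\alpha)\alpha_i)$. A near-vector space $V$ over $F$ is multiplicative if there is a bijective additive map $\phi:V\to F^{\boldsymbol\sigma,\boldsymbol\rho}$ with $\phi(\alpha v)=\alpha\phi(v)$, for some such families. *)

From HB Require Import structures.
From Stdlib Require List.
From mathcomp Require Import all_boot all_algebra.
Set Implicit Arguments. Unset Strict Implicit. Unset Printing Implicit Defensive.
Import GRing.Theory.
Local Open Scope ring_scope.

Section NearField.
Variables (F : zmodType) (mul : F -> F -> F) (one : F).

Definition is_near_field : Prop :=
  (forall a b c, mul a (mul b c) = mul (mul a b) c) /\
  (forall a, mul one a = a) /\ (forall a, mul a one = a) /\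
  one != 0 /\
  (forall a b, a != 0 -> b != 0 -> mul a b != 0) /\
  (forall a, a != 0 -> exists2 b, b != 0 & mul b a = one /\ mul a b = one) /\
  (forall a b c, mul a (b + c) = mul a b + mul a c).

Definition right_distributive_elt (g : F) : Prop :=
  forall a b, mul (a + b) g = mul a g + mul b g.

Definition finite_dim_over_Fd : Prop :=
  exists s : seq F, forall a : F, exists c : seq F,
    size c = size s /\ (forall x, x \in c -> right_distributive_elt x) /\
    a = \sum_(i < size s) mul s`_i c`_i.

Definition mult_aut (sigma : F -> F) : Prop :=
  bijective sigma /\ (forall a b, sigma (mul a b) = mul (sigma a) (sigma b)) /\
  sigma one = one.

(* [op] is the operation +_sigma, i.e. op a b = sigma^-1 (sigma a + sigma b). *)
Definition is_sigma_add (sigma : F -> F) (op : F -> F -> F) : Prop :=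
  forall a b, sigma (op a b) = sigma a + sigma b.

Definition finitely_many_induced_additions : Prop :=
  exists L : seq (F -> F -> F), forall sigma, mult_aut sigma ->
    exists2 op, List.In op L & is_sigma_add sigma op.

Definition finsupp (J : Type) (f : J -> F) : Prop :=
  exists L : seq J, forall j, ~ List.In j L -> f j = 0.

Section NVS.
Variables (V : Type) (addV : V -> V -> V) (zeroV : V) (oppV : V -> V)
          (act : F -> V -> V).

Definition quasi_kernel (u : V) : Prop :=
  forall a b, exists c, addV (act a u) (act b u) = act c u.

Definition qk_generates : Prop :=
  forall v, exists s : seq (bool * V),
    (forall p, List.In p s -> quasi_kernel p.2) /\
    v = foldr (fun p acc => addV (if p.1 then oppV p.2 else p.2) acc) zeroV s.

Definition is_nvs : Prop :=
  (associative addV /\ commutative addV /\ left_id zeroV addV /\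
   left_inverse zeroV oppV addV) /\
  (forall a u v, act a (addV u v) = addV (act a u) (act a v)) /\
  (forall v, act one v = v) /\
  (forall a b v, act (mul a b) v = act a (act b v)) /\
  (forall v, act 0 v = zeroV) /\
  (forall v, act (- one) v = oppV v) /\
  (forall a b v, act a v = act b v -> a = b \/ v = zeroV) /\
  qk_generates.

(* V is a multiplicative near-vector space: a bijective additive map
   phi : V -> F^{sigma,rho} commuting with scalars. Elements of
   F^{sigma,rho} are the finitely supported functions J -> F. *)
Definition is_mult_nvs : Prop :=
  is_nvs /\
  exists (J : Type) (sigma rho : J -> F -> F) (phi : V -> J -> F),
    (forall j, mult_aut (sigma j)) /\ (forall j, mult_aut (rho j)) /\
    (forall v, finsupp (phi v)) /\
    (forall u v, phi u =1 phi v -> u = v) /\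
    (forall g : J -> F, finsupp g -> exists v, phi v =1 g) /\
    (forall u v j, (sigma j) (phi (addV u v) j) = sigma j (phi u j) + sigma j (phi v j)) /\
    (forall a v j, phi (act a v) j = mul (rho j a) (phi v j)).
End NVS.
End NearField.

Definition prod_add (I : Type) (V : I -> Type) (addV : forall k, V k -> V k -> V k)
  (x y : forall k, V k) : forall k, V k := fun k => addV k (x k) (y k).
Definition prod_opp (I : Type) (V : I -> Type) (oppV : forall k, V k -> V k)
  (x : forall k, V k) : forall k, V k := fun k => oppV k (x k).
Definition prod_zero (I : Type) (V : I -> Type) (zeroV : forall k, V k)
  : forall k, V k := fun k => zeroV k.
Definition prod_act (F : Type) (I : Type) (V : I -> Type)
  (act : forall k, F -> V k -> V k) (a : F) (x : forall k, V k) : forall k, V k :=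
  fun k => act k a (x k).

(* Identify a multiplicative near-vector space V with F^{sigma,rho} via phi.  For a
   nonzero coordinate x = phi(v)_j, the functional c |-> sigma_j (rho_j(c) x) equals
   sigma_j(x) tau(c), where tau = sigma_j (x^-1 rho_j(.) x) is a multiplicative
   automorphism; by left distributivity it is additive for +_tau.  Sorting the
   coordinates of v by which of the finitely many additions *_1, ..., *_n they are
   additive for writes v = v_1 + ... + v_n with a v_i + b v_i = (a *_i b) v_i.  The
   *_i do not depend on V, so in the product the componentwise sums of such pieces
   lie in the quasi-kernel and generate it; the other axioms hold componentwise. *)

From mathcomp Require Import all_boot all_algebra.
From Stdlib Require Import ClassicalEpsilon FunctionalExtensionality Classical.
Set Implicit Arguments. Unset Strict Implicit. Unset Printing Implicit Defensive.
Import GRing.Theory.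
Local Open Scope ring_scope.

Lemma In_tnth (T : Type) (s : seq T) (x : T) :
  List.In x s -> exists i : 'I_(size s), tnth (in_tuple s) i = x.
Proof.
elim: s => //= y s IH [<-|/IH [i <-]]; first by exists ord0.
by exists (lift ord0 i); rewrite !(tnth_nth x).
Qed.

Section NearFieldFacts.
Variables (F : zmodType) (mul : F -> F -> F) (one : F).
Hypothesis NF : is_near_field mul one.

Lemma nf_mulr0 a : mul a 0 = 0.
Proof.
case: NF => _ [_ [_ [_ [_ [_ mulrDr]]]]].
by apply: (addrI (mul a 0)); rewrite -mulrDr !addr0.
Qed.

Lemma nf_mul0r a : mul 0 a = 0.
Proof.
case: NF => mulA [_ [mulr1 [_ [mul_neq0 [invP _]]]]].
have [-> | a_neq0] := eqVneq a 0; first exact: nf_mulr0.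
apply: contra_eq (a_neq0) => m0a_neq0.
have [a' a'_neq0 [_ aa']] := invP a a_neq0.
by move: (mul_neq0 _ _ m0a_neq0 a'_neq0); rewrite -mulA aa' mulr1 eqxx.
Qed.

Lemma mult_aut0 s : mult_aut mul one s -> s 0 = 0.
Proof.
move=> [[t sK tK] [sM _]].
by have := sM (t 0) 0; rewrite nf_mulr0 tK nf_mul0r.
Qed.

Lemma mult_aut_inj s : mult_aut mul one s -> injective s.
Proof. by move=> [[t sK _] _]; exact: can_inj sK. Qed.

Lemma mult_aut_id : mult_aut mul one id.
Proof. by split; first exists id. Qed.

Lemma mult_aut_comp s t :
  mult_aut mul one s -> mult_aut mul one t -> mult_aut mul one (s \o t).
Proof.
move=> [s_bij [sM s1]] [t_bij [tM t1]]; split; first exact: bij_comp.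
by split=> [a b|] /=; rewrite ?tM ?sM ?t1 ?s1.
Qed.

Lemma mult_aut_conj x x' : mul x' x = one -> mul x x' = one ->
  mult_aut mul one (fun b => mul x' (mul b x)).
Proof.
case: NF => mulA [mul1r [mulr1 _]] x'x xx'; split; last split.
- exists (fun b => mul x (mul b x')) => b.
    by rewrite !mulA xx' mul1r -mulA xx' mulr1.
  by rewrite !mulA x'x mul1r -mulA x'x mulr1.
- by move=> a b; rewrite !mulA -(mulA _ x x') xx' mulr1.
- by rewrite mul1r.
Qed.

Variable L : seq (F -> F -> F).
Hypothesis L_induced_additions :
  forall s, mult_aut mul one s -> exists2 op, List.In op L & is_sigma_add s op.

Lemma coord_additive_for_some_op s r x :
  mult_aut mul one s -> mult_aut mul one r ->
  exists i : 'I_(size L), forall a b,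
    s (mul (r (tnth (in_tuple L) i a b)) x) = s (mul (r a) x) + s (mul (r b) x).
Proof.
move=> s_aut r_aut; have [-> | x_neq0] := eqVneq x 0.
  have [op opL _] := L_induced_additions mult_aut_id; have [i _] := In_tnth opL.
  by exists i => a b; rewrite !nf_mulr0 (mult_aut0 s_aut) addr0.
case: NF => mulA [mul1r [_ [_ [_ [invP mulrDr]]]]].
have [x' _ [x'x xx']] := invP x x_neq0.
pose tau := s \o (fun b => mul x' (mul b x)) \o r.
have tau_aut : mult_aut mul one tau.
  exact: mult_aut_comp (mult_aut_comp s_aut (mult_aut_conj x'x xx')) r_aut.
have s_coord c : s (mul (r c) x) = mul (s x) (tau c).
  by case: s_aut => _ [sM _]; rewrite /tau /= -sM mulA xx' mul1r.
have [op opL tau_add] := L_induced_additions tau_aut; have [i iE] := In_tnth opL.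
by exists i => a b; rewrite iE !s_coord tau_add mulrDr.
Qed.
End NearFieldFacts.

Section QuasiKernelDecomposition.
Variables (F V : Type) (addV : V -> V -> V) (zeroV : V) (act : F -> V -> V).

Definition qk_for (op : F -> F -> F) (u : V) : Prop :=
  forall a b, addV (act a u) (act b u) = act (op a b) u.

Definition qk_decomposable n (ops : 'I_n -> F -> F -> F) : Prop :=
  forall v, exists p : 'I_n -> V,
    v = \big[addV/zeroV]_(i < n) p i /\ forall i, qk_for (ops i) (p i).
End QuasiKernelDecomposition.

Lemma qk_generates_of_decomposable (F : zmodType) (V : Type) (addV : V -> V -> V)
    (zeroV : V) (oppV : V -> V) (act : F -> V -> V) n (ops : 'I_n -> F -> F -> F) :
  qk_decomposable addV zeroV act ops -> qk_generates addV zeroV oppV act.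
Proof.
move=> dec v; have [p [-> p_qk]] := dec v.
exists [seq (false, p i) | i <- index_enum 'I_n]; split; last first.
  by rewrite foldr_map unlock.
elim: (index_enum _) => //= i s IH q [<- | /IH //] a b.
by exists (ops i a b); rewrite p_qk.
Qed.

Section MultiplicativeNearVectorSpace.
Variables (F : zmodType) (mul : F -> F -> F) (one : F) (L : seq (F -> F -> F)).
Hypothesis NF : is_near_field mul one.
Hypothesis L_induced_additions :
  forall s, mult_aut mul one s -> exists2 op, List.In op L & is_sigma_add s op.
Variables (V : Type) (addV : V -> V -> V) (zeroV : V) (act : F -> V -> V).
Hypothesis add0V : left_id zeroV addV.
Variables (J : Type) (sigma rho : J -> F -> F) (phi : V -> J -> F).
Hypothesis sigma_aut : forall j, mult_aut mul one (sigma j).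
Hypothesis rho_aut : forall j, mult_aut mul one (rho j).
Hypothesis phi_finsupp : forall v, finsupp (phi v).
Hypothesis phi_inj : forall u v, phi u =1 phi v -> u = v.
Hypothesis phi_surj : forall g, finsupp g -> exists v, phi v =1 g.
Hypothesis phi_add :
  forall u v j, sigma j (phi (addV u v) j) = sigma j (phi u j) + sigma j (phi v j).
Hypothesis phi_act : forall a v j, phi (act a v) j = mul (rho j a) (phi v j).

Lemma sigma0 j : sigma j 0 = 0.
Proof. exact: (mult_aut0 NF (sigma_aut j)). Qed.

Lemma phi0 j : phi zeroV j = 0.
Proof.
apply: (mult_aut_inj (sigma_aut j)); apply: (addrI (sigma j (phi zeroV j))).
by rewrite -phi_add add0V sigma0 addr0.
Qed.

Lemma phi_inj_sigma u v : (forall j, sigma j (phi u j) = sigma j (phi v j)) -> u = v.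
Proof. by move=> eq_uv; apply: phi_inj => j; apply: (mult_aut_inj (sigma_aut j)). Qed.

Lemma sigma_phi_big (I : Type) (r : seq I) (p : I -> V) j :
  sigma j (phi (\big[addV/zeroV]_(i <- r) p i) j) = \sum_(i <- r) sigma j (phi (p i) j).
Proof.
apply: (big_morph (fun v => sigma j (phi v j))) => [u v|]; first exact: phi_add.
by rewrite phi0 sigma0.
Qed.

Lemma phi_qk_decomposable :
  qk_decomposable addV zeroV act (fun i : 'I_(size L) => tnth (in_tuple L) i).
Proof.
move=> v.
have /ClassicalEpsilon.choice [cls cls_add] := fun j =>
  coord_additive_for_some_op NF L_induced_additions (phi v j) (sigma_aut j) (rho_aut j).
pose piece i j := if i == cls j then phi v j else 0.
have piece_finsupp i : finsupp (piece i).
  by have [s supp] := phi_finsupp v; exists s => j /supp; rewrite /piece; case: ifP.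
have /ClassicalEpsilon.choice [p phi_p] := fun i => phi_surj (piece_finsupp i).
exists p; split=> [|i a b].
  apply: phi_inj_sigma => j; rewrite sigma_phi_big (bigD1 (cls j)) //= big1.
    by rewrite phi_p /piece eqxx addr0.
  by move=> i /negPf i_neq; rewrite phi_p /piece i_neq sigma0.
apply: phi_inj_sigma => j; rewrite phi_add !phi_act !phi_p /piece.
by case: eqP => [-> | _]; rewrite ?cls_add // !(nf_mulr0 NF) sigma0 addr0.
Qed.
End MultiplicativeNearVectorSpace.

Lemma mult_nvs_qk_decomposable (F : zmodType) (mul : F -> F -> F) (one : F)
    (L : seq (F -> F -> F)) (V : Type) (addV : V -> V -> V) (zeroV : V)
    (oppV : V -> V) (act : F -> V -> V) :
  is_near_field mul one ->
  (forall s, mult_aut mul one s -> exists2 op, List.In op L & is_sigma_add s op) ->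
  is_mult_nvs mul one addV zeroV oppV act ->
  qk_decomposable addV zeroV act (fun i : 'I_(size L) => tnth (in_tuple L) i).
Proof.
move=> NF L_ind [[[_ [_ [add0V _]]] _] [J [sigma [rho [phi [sigma_aut [rho_aut
  [phi_finsupp [phi_inj [phi_surj [phi_add phi_act]]]]]]]]]]].
exact: (phi_qk_decomposable NF L_ind add0V sigma_aut rho_aut phi_finsupp phi_inj
  phi_surj phi_add phi_act).
Qed.

Section DirectProduct.
Variables (F : zmodType) (mul : F -> F -> F) (one : F) (I : Type) (V : I -> Type).
Variables (addV : forall k, V k -> V k -> V k) (zeroV : forall k, V k).
Variables (oppV : forall k, V k -> V k) (act : forall k, F -> V k -> V k).
Arguments addV : clear implicits.
Arguments zeroV : clear implicits.
Arguments oppV : clear implicits.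
Arguments act : clear implicits.

Lemma prod_act_free :
  (forall k a b v, act k a v = act k b v -> a = b \/ v = zeroV k) ->
  forall a b x, prod_act act a x = prod_act act b x -> a = b \/ x = prod_zero zeroV.
Proof.
move=> free a b x eq_ax_bx.
have [[k xk_neq0] | x0] := classic (exists k, x k <> zeroV k).
  by case: (free k a b (x k) (congr1 (fun y => y k) eq_ax_bx)); [left | ].
right; apply: functional_extensionality_dep => k.
by apply: NNPP => xk_neq0; apply: x0; exists k.
Qed.

Lemma prod_nvs :
  (forall k, is_nvs mul one (addV k) (zeroV k) (oppV k) (act k)) ->
  qk_generates (prod_add addV) (prod_zero zeroV) (prod_opp oppV) (prod_act act) ->
  is_nvs mul one (prod_add addV) (prod_zero zeroV) (prod_opp oppV) (prod_act act).
Proof.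
move=> nvsV gen; repeat split.
all: try (move=> *; apply: functional_extensionality_dep => k;
  have [[? [? [? ?]]] [? [? [? [? [? _]]]]]] := nvsV k; by eauto).
- apply: prod_act_free => k.
  by case: (nvsV k) => _ [_ [_ [_ [_ [_ [free _]]]]]].
- exact: gen.
Qed.

Lemma prod_big_apply (J : Type) (r : seq J) (u : J -> forall k, V k) k :
  (\big[prod_add addV/prod_zero zeroV]_(j <- r) u j) k =
  \big[addV k/zeroV k]_(j <- r) u j k.
Proof. exact: (big_morph (fun x : forall k, V k => x k)). Qed.

Lemma prod_qk_decomposable n (ops : 'I_n -> F -> F -> F) :
  (forall k, qk_decomposable (addV k) (zeroV k) (act k) ops) ->
  qk_decomposable (prod_add addV) (prod_zero zeroV) (prod_act act) ops.
Proof.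
move=> dec v.
pose dec_v k := constructive_indefinite_description _ (dec k (v k)).
exists (fun i k => proj1_sig (dec_v k) i).
split=> [|i a b]; apply: functional_extensionality_dep => k.
  by rewrite prod_big_apply; case: (proj2_sig (dec_v k)).
by case: (proj2_sig (dec_v k)) => _ /(_ i a b).
Qed.
End DirectProduct.

Theorem theorem3p17 (F : zmodType) (mul : F -> F -> F) (one : F)
  (I : Type) (V : I -> Type)
  (addV : forall k, V k -> V k -> V k) (zeroV : forall k, V k)
  (oppV : forall k, V k -> V k) (act : forall k, F -> V k -> V k) :
  is_near_field mul one ->
  finitely_many_induced_additions mul one ->
  finite_dim_over_Fd mul ->
  (forall k, is_mult_nvs mul one (addV k) (zeroV k) (oppV k) (act k)) ->
  is_nvs mul one (prod_add addV) (prod_zero zeroV) (prod_opp oppV) (prod_act act).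
Proof.
move=> NF [L L_ind] _ multV.
apply: prod_nvs => [k | ]; first exact: (proj1 (multV k)).
have dec k := mult_nvs_qk_decomposable NF L_ind (multV k).
exact: qk_generates_of_decomposable (prod_qk_decomposable dec).
Qed.
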